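(* Under the setting and hypotheses of the following result — namely, $\mathbb P[\mathbf s_{1,\ldots,N}\in\mathbb S\mid\mathbf s_0,\boldsymbol\pi^0]\ge S_0\ge S$ and, for every $k\in\{1,\ldots,N-1\}$ and every $\mathbf s_k\in\mathbb S$, $\mathbb P[\mathbf s_{k+1,\ldots,N}\in\mathbb S\mid\mathbf s_k,\boldsymbol\pi^k]\ge\gamma_k\,\mathbb P[\mathbf s_{k+1,\ldots,N}\in\mathbb S\mid\mathbf s_k,\boldsymbol\pi^{k-1}]$ with $\gamma_k\in(0,1]$ — if moreover the factors are chosen so that $\big(\prod_{k=1}^{N-1}\gamma_k\big)S_0=S$, then the closed-loop policy sequence $\{\boldsymbol\pi^0_0,\ldots,\boldsymbol\pi^{N-1}_{N-1}\}$ satisfies $$\mathbb P\big[\mathbf s_{1,\ldots,N}\in\mathbb S\mid\mathbf s_0,\{\boldsymbol\pi^0_0,\ldots,\boldsymbol\pi^{N-1}_{N-1}\}\big]\ge S.$$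
   Context: States $\mathbf s_k\in\mathbb R^n$ evolve as a controlled Markov chain with transition density $\rho[\mathbf s_+\mid\mathbf s,\mathbf u]$; $\mathbb S\subset\mathbb R^n$ is measurable, $\mathbf s_0\in\mathbb S$, $N\in\mathbb N$, $S\in[0,1]$. For each $k\in\{0,\ldots,N-1\}$, $\boldsymbol\pi^k=\{\boldsymbol\pi^k_k,\ldots,\boldsymbol\pi^k_{N-1}\}$ is a policy sequence of measurable maps $\mathbf s\mapsto\mathbf u$ for times $k,\ldots,N-1$; the closed loop applies $\mathbf u_k=\boldsymbol\pi^k_k(\mathbf s_k)$. The notation $\mathbf s_{a,\ldots,b}\in\mathbb S$ means $\mathbf s_j\in\mathbb S$ for $j=a,\ldots,b$. $\mathbb P[\mathbf s_{1,\ldots,N}\in\mathbb S\mid\mathbf s_0,\cdot]$ is the mission-wide probability of safety; $\mathbb P[\mathbf s_{k+1,\ldots,N}\in\mathbb S\mid\mathbf s_k,\cdot]$ is the remaining mission-wide probability of safety from state $\mathbf s_k$ at time $k$ under the given policy components at times $k,\ldots,N-1$. *)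

From HB Require Import structures.
From mathcomp Require Import all_boot all_order all_algebra.
From mathcomp Require Import all_classical all_reals all_analysis.
Set Implicit Arguments. Unset Strict Implicit. Unset Printing Implicit Defensive.
Import Order.TTheory GRing.Theory Num.Theory.
Local Open Scope classical_set_scope.
Local Open Scope ring_scope.
Local Open Scope ereal_scope.

(* Controlled Markov chain on a state space T (measurable) with control space U.
   rho x s u = transition density rho[s_+ = x | s, u] w.r.t. the reference measure mu.
   A policy sequence is  pol : nat -> T -> U  indexed by absolute time j
   (only the components j = k, ..., N-1 are used). *)

(* safe_rec m j s = probability that the next m states s_{j+1}, ..., s_{j+m}
   all lie in SS, starting from s_j = s, applying u_i = pol i s_i. *)
Fixpoint safe_rec (d1 d2 : measure_display) (T : measurableType d1)
  (U : measurableType d2) (R : realType) (mu : {measure set T -> \bar R})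
  (rho : T -> T -> U -> R) (SS : set T) (pol : nat -> T -> U)
  (m j : nat) (s : T) : \bar R :=
  match m with
  | 0 => 1
  | m'.+1 => \int[mu]_(x in SS)
               ((rho x s (pol j s))%:E * safe_rec mu rho SS pol m' j.+1 x)
  end.

(* safe_prob mu rho SS N pol k s = P[ s_{k+1,...,N} in SS | s_k = s, pol ]. *)
Definition safe_prob (d1 d2 : measure_display) (T : measurableType d1)
  (U : measurableType d2) (R : realType) (mu : {measure set T -> \bar R})
  (rho : T -> T -> U -> R) (SS : set T) (N : nat) (pol : nat -> T -> U)
  (k : nat) (s : T) : \bar R :=
  safe_rec mu rho SS pol (N - k) k s.

From HB Require Import structures.
From mathcomp Require Import all_boot all_order all_algebra.
From mathcomp Require Import all_classical all_reals all_analysis.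
Import Order.TTheory GRing.Theory Num.Theory.
Local Open Scope classical_set_scope.
Local Open Scope ring_scope.

(* Write G_k for the tail product of the gamma_i over k <= i < N.  Backward
   induction on the remaining horizon shows
     G_{k+1} P[s_{k+1..N} in S | s_k, pi^k] <= P[s_{k+1..N} in S | s_k, closed loop]
   for every safe s_k: both sides apply the same control pi^k_k(s_k) at time k,
   and at time k+1 the assumption gamma_{k+1} P[.. | pi^k] <= P[.. | pi^{k+1}]
   trades one factor of G_{k+1} = gamma_{k+1} G_{k+2} for the switch of policy.
   At k = 0 the left side is at least G_1 S_0 = S. *)

Import HBNNSimple.

(* No measurability of [f] or [g] is needed: the inequality is proved on the
   suprema of simple functions defining the nonnegative integrals. *)
Lemma ge0_integral_scale_le d (T : measurableType d) (R : realType)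
  (mu : {measure set T -> \bar R}) (D : set T) (f g : T -> \bar R) (c : R) :
  0 < c -> (forall x, D x -> (0 <= f x)%E) ->
  (forall x, D x -> (c%:E * f x <= g x)%E) ->
  (c%:E * \int[mu]_(x in D) f x <= \int[mu]_(x in D) g x)%E.
Proof.
move=> c0 f0 fg.
have g0 x : D x -> (0 <= g x)%E.
  move=> Dx; apply: le_trans (fg x Dx).
  by apply: mule_ge0; [rewrite lee_fin ltW | exact: f0].
rewrite !ge0_integralE //= -ereal_sup_pZl //.
apply/ge_ereal_sup => _ [_ [h /= hf <-] <-].
apply: ereal_sup_ubound => /=.
exists (scale_nnsfun h (ltW c0)); last by rewrite sintegralrM.
move=> x /=; rewrite /patch; case: ifPn => Dx.
  have := hf x; rewrite /patch Dx EFinM => hx.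
  apply: le_trans (fg x _); last by move: Dx; rewrite inE.
  by rewrite lee_wpmul2l // lee_fin ltW.
have := hf x; rewrite /patch (negbTE Dx) lee_fin => hx.
by rewrite lee_fin mulr_ge0_le0 // ltW.
Qed.

Section ClosedLoopSafety.
Variables (d1 d2 : measure_display) (T : measurableType d1).
Variables (U : measurableType d2) (R : realType) (mu : {measure set T -> \bar R}).
Variables (rho : T -> T -> U -> R) (SS : set T) (N : nat).
Variables (pi : nat -> nat -> T -> U) (gamma : nat -> R).

Hypothesis rho_ge0 : forall x s u, 0 <= rho x s u.
Hypothesis gamma_gt0 : forall k, (1 <= k < N)%N -> 0 < gamma k.
Hypothesis safe_prob_switch_ge : forall k s, (1 <= k < N)%N -> SS s ->
  ((gamma k)%:E * safe_prob mu rho SS N (pi k.-1) k s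
     <= safe_prob mu rho SS N (pi k) k s)%E.

Let closed_loop : nat -> T -> U := fun j => pi j j.

Lemma safe_rec_ge0 pol m j s : (0 <= safe_rec mu rho SS pol m j s)%E.
Proof.
elim: m j s => [|m IH] j s //=.
by apply: integral_ge0 => x _; rewrite mule_ge0 ?lee_fin.
Qed.

Lemma prod_gamma_gt0 a : (1 <= a)%N -> 0 < \prod_(a <= i < N) gamma i.
Proof.
move=> a1; rewrite big_nat_cond; apply: (big_ind (fun x => 0 < x)) => //.
  exact: mulr_gt0.
move=> i /andP[/andP[ai iN] _]; apply: gamma_gt0.
by rewrite iN (leq_trans a1 ai).
Qed.

Lemma safe_rec_switch_ge k m x : (k + m.+1)%N = N -> SS x ->
  ((\prod_(k.+1 <= i < N) gamma i)%:E * safe_rec mu rho SS (pi k) m k.+1 x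
    <= (\prod_(k.+2 <= i < N) gamma i)%:E
       * safe_rec mu rho SS (pi k.+1) m k.+1 x)%E.
Proof.
move=> kmN Sx; case: m kmN => [|m] kmN.
  by rewrite !big_geq // -kmN addn1.
have kN : (k.+1 < N)%N by rewrite -kmN !addnS !ltnS leq_addr.
rewrite big_ltn // mulrC EFinM -muleA.
apply: lee_wpmul2l; first by rewrite lee_fin ltW ?prod_gamma_gt0.
have := safe_prob_switch_ge k.+1 x; rewrite kN /safe_prob -kmN addnS subSS addKn.
exact.
Qed.

Lemma safe_rec_closed_loop_ge m k s : (k + m)%N = N -> SS s ->
  ((\prod_(k.+1 <= i < N) gamma i)%:E * safe_rec mu rho SS (pi k) m k s
    <= safe_rec mu rho SS closed_loop m k s)%E.
Proof.
elim: m k s => [|m IH] k s kmN Ss.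
  by rewrite /= mule1 big_geq ?lee_fin // -kmN addn0.
rewrite /=; apply: ge0_integral_scale_le => [|x _|x Sx]; first exact: prod_gamma_gt0.
  by rewrite mule_ge0 ?lee_fin ?safe_rec_ge0.
rewrite muleCA; apply: lee_wpmul2l; first by rewrite lee_fin.
apply: le_trans (safe_rec_switch_ge k m x kmN Sx) _.
by apply: IH Sx; rewrite -kmN addSnnS.
Qed.

Lemma safe_prob_closed_loop_ge s : SS s ->
  ((\prod_(1 <= i < N) gamma i)%:E * safe_prob mu rho SS N (pi 0%N) 0 s
    <= safe_prob mu rho SS N closed_loop 0 s)%E.
Proof. by move=> Ss; rewrite /safe_prob subn0; apply: safe_rec_closed_loop_ge. Qed.

End ClosedLoopSafety.

Arguments prod_gamma_gt0 {R N gamma}.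
Arguments safe_prob_closed_loop_ge {d1 d2 T U R mu rho SS N pi gamma}.

Theorem corollary1 (d1 d2 : measure_display) (T : measurableType d1)
  (U : measurableType d2) (R : realType) (mu : {measure set T -> \bar R})
  (rho : T -> T -> U -> R) (SS : set T) (N : nat)
  (pi : nat -> nat -> T -> U) (s0 : T) (Sl S0 : R) (gamma : nat -> R) :
  measurable SS ->
  (forall x s u, 0 <= rho x s u) ->
  measurable_fun setT (fun p : T * (T * U) => rho p.1 p.2.1 p.2.2) ->
  (forall s u, (\int[mu]_x (rho x s u)%:E = 1)%E) ->
  (forall k j, measurable_fun setT (pi k j)) ->
  SS s0 ->
  0 <= Sl <= 1 ->
  (S0%:E <= safe_prob mu rho SS N (pi 0%N) 0 s0)%E ->
  Sl <= S0 ->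
  (forall k, (1 <= k < N)%N -> 0 < gamma k <= 1) ->
  (forall k s, (1 <= k < N)%N -> SS s ->
     ((gamma k)%:E * safe_prob mu rho SS N (pi k.-1) k s
        <= safe_prob mu rho SS N (pi k) k s)%E) ->
  (\prod_(1 <= k < N) gamma k) * S0 = Sl ->
  (Sl%:E <= safe_prob mu rho SS N (fun j => pi j j) 0 s0)%E.
Proof.
move=> _ rho0 _ _ _ Ss0 _ HS0 _ gamma01 Hswitch <-.
have gamma0 k : (1 <= k < N)%N -> 0 < gamma k by case/gamma01/andP.
apply: le_trans _ (safe_prob_closed_loop_ge rho0 gamma0 Hswitch _ Ss0).
by rewrite EFinM lee_wpmul2l // lee_fin ltW // (prod_gamma_gt0 gamma0).
Qed.
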